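(* Let $X,Y$ be sets and consider multirelations $X\leftrightarrow\mathcal{P}Y$. (1) For inner deterministic $R,S$: $R\sqsubseteq_\downarrow S\iff R\subseteq S$ and $R\sqsubseteq_\uparrow S\iff S\subseteq R$; consequently $R\sqsubseteq_\updownarrow S\iff R=S$. (2) $\sqsubseteq_\updownarrow$ is antisymmetric (hence a partial order) on the set of inner univalent multirelations. (3) $\sqsubseteq_\downarrow$, $\sqsubseteq_\uparrow$ and $\sqsubseteq_\updownarrow$ are antisymmetric (hence partial orders) on the set of outer univalent multirelations. (4) On outer deterministic multirelations these three partial orders coincide: for outer deterministic $R,S$, $R\sqsubseteq_\downarrow S\iff R\sqsubseteq_\uparrow S\iff R\sqsubseteq_\updownarrow S$.
   Context: $R^{\uparrow}=\{(a,A)\mid\exists B.(a,B)\in R\wedge B\subseteq A\}$, $R^{\downarrow}=\{(a,A)\mid\exists B.(a,B)\in R\wedge A\subseteq B\}$. $R\sqsubseteq_\uparrow S\iff S\subseteq R^{\uparrow}$; $R\sqsubseteq_\downarrow S\iff R\subseteq S^{\downarrow}$; $R\sqsubseteq_\updownarrow S\iff R\sqsubseteq_\downarrow S\wedge R\sqsubseteq_\uparrow S$. A multirelation $R$ is inner univalent if every $(a,B)\in R$ has $B$ empty or a singleton, inner deterministic if every $(a,B)\in R$ has $B$ a singleton; outer univalent if for each $a\in X$ there is at most one $B$ with $(a,B)\in R$, outer deterministic if for each $a\in X$ there is exactly one such $B$. *)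

Set Implicit Arguments.

Definition pset (Y : Type) := Y -> Prop.
Definition subset (Y : Type) (A B : pset Y) : Prop := forall y, A y -> B y.

(* a multirelation R : X <-> P Y ; (a, B) \in R  is  R a B *)
Definition mrel (X Y : Type) := X -> pset Y -> Prop.

Definition mincl (X Y : Type) (R S : mrel X Y) : Prop :=
  forall a A, R a A -> S a A.

Definition upc (X Y : Type) (R : mrel X Y) : mrel X Y :=
  fun a A => exists B, R a B /\ subset B A.
Definition downc (X Y : Type) (R : mrel X Y) : mrel X Y :=
  fun a A => exists B, R a B /\ subset A B.

Definition ref_up (X Y : Type) (R S : mrel X Y) : Prop := mincl S (upc R).
Definition ref_down (X Y : Type) (R S : mrel X Y) : Prop := mincl R (downc S).
Definition ref_updown (X Y : Type) (R S : mrel X Y) : Prop :=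
  ref_down R S /\ ref_up R S.

Definition is_empty (Y : Type) (B : pset Y) : Prop := forall y, ~ B y.
Definition is_singleton (Y : Type) (B : pset Y) : Prop :=
  exists y, forall z, B z <-> z = y.

Definition inner_univalent (X Y : Type) (R : mrel X Y) : Prop :=
  forall a B, R a B -> is_empty B \/ is_singleton B.
Definition inner_deterministic (X Y : Type) (R : mrel X Y) : Prop :=
  forall a B, R a B -> is_singleton B.
Definition outer_univalent (X Y : Type) (R : mrel X Y) : Prop :=
  forall a B C, R a B -> R a C -> B = C.
Definition outer_deterministic (X Y : Type) (R : mrel X Y) : Prop :=
  forall a, exists B, R a B /\ forall C, R a C -> C = B.

Definition partial_order_on (X Y : Type) (P : mrel X Y -> Prop)
  (rel : mrel X Y -> mrel X Y -> Prop) : Prop :=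
  (forall R, P R -> rel R R) /\
  (forall R S T, P R -> P S -> P T -> rel R S -> rel S T -> rel R T) /\
  (forall R S, P R -> P S -> rel R S -> rel S R -> R = S).

(* Antisymmetry can only fail when one point has several images related by
   inclusion.  For inner univalent relations every image is empty or a
   singleton, and between such sets inclusion from a singleton, or into the
   empty set, is already equality.  For outer univalent relations a round trip
   R to S to R comes back to the unique image of R, which squeezes the image
   of S in between.  For outer deterministic relations both refinements say
   that the unique R-image of each point is contained in its unique S-image. *)
From Stdlib Require Import FunctionalExtensionality PropExtensionality.
Set Implicit Arguments.

Lemma subset_refl (Y : Type) (A : pset Y) : subset A A.
Proof. intros y Ay; exact Ay. Qed.

Lemma subset_trans (Y : Type) (A B C : pset Y) :
  subset A B -> subset B C -> subset A C.
Proof. intros AB BC y Ay; exact (BC y (AB y Ay)). Qed.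

Lemma pset_ext (Y : Type) (A B : pset Y) : subset A B -> subset B A -> A = B.
Proof.
  intros AB BA; apply functional_extensionality; intro y.
  apply propositional_extensionality; split; [apply AB | apply BA].
Qed.

Lemma mrel_ext (X Y : Type) (R S : mrel X Y) : mincl R S -> mincl S R -> R = S.
Proof.
  intros RS SR; apply functional_extensionality; intro a.
  apply functional_extensionality; intro A.
  apply propositional_extensionality; split; [apply RS | apply SR].
Qed.

Lemma subset_empty_eq (Y : Type) (A B : pset Y) :
  is_empty B -> subset A B -> A = B.
Proof.
  intros EB AB; apply pset_ext; [exact AB |].
  intros y By; destruct (EB y By).
Qed.

Lemma singleton_subset_eq (Y : Type) (A B : pset Y) :
  is_singleton A -> is_empty B \/ is_singleton B -> subset A B -> A = B.
Proof.
  intros [x Ax] [EB | [y By]] AB.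
  - destruct (EB x (AB x (proj2 (Ax x) eq_refl))).
  - assert (xy : x = y) by exact (proj1 (By x) (AB x (proj2 (Ax x) eq_refl))).
    subst y; apply pset_ext; [exact AB |].
    intros z Bz; apply Ax, By, Bz.
Qed.

Section Refinement.

Variables X Y : Type.
Implicit Types R S T : mrel X Y.

Lemma ref_down_refl R : ref_down R R.
Proof. intros a A RA; exists A; split; [exact RA | apply subset_refl]. Qed.

Lemma ref_up_refl R : ref_up R R.
Proof. intros a A RA; exists A; split; [exact RA | apply subset_refl]. Qed.

Lemma ref_updown_refl R : ref_updown R R.
Proof. split; [apply ref_down_refl | apply ref_up_refl]. Qed.

Lemma ref_down_trans R S T : ref_down R S -> ref_down S T -> ref_down R T.
Proof.
  intros RS ST a A RA.
  destruct (RS a A RA) as [B [SB AB]]; destruct (ST a B SB) as [C [TC BC]].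
  exists C; split; [exact TC | exact (subset_trans AB BC)].
Qed.

Lemma ref_up_trans R S T : ref_up R S -> ref_up S T -> ref_up R T.
Proof.
  intros RS ST a A TA.
  destruct (ST a A TA) as [B [SB BA]]; destruct (RS a B SB) as [C [RC CB]].
  exists C; split; [exact RC | exact (subset_trans CB BA)].
Qed.

Lemma ref_updown_trans R S T : ref_updown R S -> ref_updown S T -> ref_updown R T.
Proof.
  intros [dRS uRS] [dST uST].
  split; [exact (ref_down_trans dRS dST) | exact (ref_up_trans uRS uST)].
Qed.

Lemma mincl_ref_down R S : mincl R S -> ref_down R S.
Proof. intros RS a A RA; exists A; split; [exact (RS a A RA) | apply subset_refl]. Qed.

Lemma mincl_ref_up R S : mincl S R -> ref_up R S.
Proof. intros SR a A SA; exists A; split; [exact (SR a A SA) | apply subset_refl]. Qed.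

Lemma ref_down_mincl R S :
  inner_deterministic R -> inner_univalent S -> ref_down R S -> mincl R S.
Proof.
  intros dR uS RS a A RA.
  destruct (RS a A RA) as [B [SB AB]].
  rewrite (singleton_subset_eq (dR a A RA) (uS a B SB) AB); exact SB.
Qed.

Lemma ref_up_mincl R S :
  inner_deterministic R -> inner_univalent S -> ref_up R S -> mincl S R.
Proof.
  intros dR uS RS a A SA.
  destruct (RS a A SA) as [B [RB BA]].
  rewrite <- (singleton_subset_eq (dR a B RB) (uS a A SA) BA); exact RB.
Qed.

Lemma inner_deterministic_univalent R : inner_deterministic R -> inner_univalent R.
Proof. intros dR a B RB; right; exact (dR a B RB). Qed.

Lemma ref_down_iff_mincl R S : inner_deterministic R -> inner_univalent S ->
  ref_down R S <-> mincl R S.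
Proof.
  intros dR uS; split; [exact (ref_down_mincl dR uS) | apply mincl_ref_down].
Qed.

Lemma ref_up_iff_mincl R S : inner_deterministic R -> inner_univalent S ->
  ref_up R S <-> mincl S R.
Proof.
  intros dR uS; split; [exact (ref_up_mincl dR uS) | apply mincl_ref_up].
Qed.

Lemma ref_updown_iff_eq R S : inner_deterministic R -> inner_univalent S ->
  ref_updown R S <-> R = S.
Proof.
  intros dR uS; split.
  - intros [RS SR]; apply mrel_ext;
      [exact (ref_down_mincl dR uS RS) | exact (ref_up_mincl dR uS SR)].
  - intros <-; apply ref_updown_refl.
Qed.

Lemma ref_updown_antisym_mincl R S : inner_univalent R -> inner_univalent S ->
  ref_down R S -> ref_up S R -> mincl R S.
Proof.
  intros uR uS dRS uSR a A RA.
  destruct (uR a A RA) as [EA | sA].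
  - destruct (uSR a A RA) as [B [SB BA]].
    rewrite <- (subset_empty_eq EA BA); exact SB.
  - destruct (dRS a A RA) as [B [SB AB]].
    rewrite (singleton_subset_eq sA (uS a B SB) AB); exact SB.
Qed.

Lemma ref_down_antisym_mincl R S :
  outer_univalent R -> ref_down R S -> ref_down S R -> mincl R S.
Proof.
  intros oR RS SR a A RA.
  destruct (RS a A RA) as [B [SB AB]]; destruct (SR a B SB) as [C [RC BC]].
  rewrite (oR a C A RC RA) in BC.
  rewrite (pset_ext AB BC); exact SB.
Qed.

Lemma ref_up_antisym_mincl R S :
  outer_univalent R -> ref_up R S -> ref_up S R -> mincl R S.
Proof.
  intros oR RS SR a A RA.
  destruct (SR a A RA) as [B [SB BA]]; destruct (RS a B SB) as [C [RC CB]].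
  rewrite (oR a C A RC RA) in CB.
  rewrite <- (pset_ext BA CB); exact SB.
Qed.

Lemma ref_down_outer_deterministic R S : outer_deterministic S ->
  ref_down R S <-> forall a A B, R a A -> S a B -> subset A B.
Proof.
  intros dS; split.
  - intros RS a A B RA SB.
    destruct (RS a A RA) as [B' [SB' AB']]; destruct (dS a) as [C [_ uC]].
    rewrite (uC B SB), <- (uC B' SB'); exact AB'.
  - intros RS a A RA; destruct (dS a) as [B [SB _]].
    exists B; split; [exact SB | exact (RS a A B RA SB)].
Qed.

Lemma ref_up_outer_deterministic R S : outer_deterministic R ->
  ref_up R S <-> forall a A B, R a A -> S a B -> subset A B.
Proof.
  intros dR; split.
  - intros RS a A B RA SB.
    destruct (RS a B SB) as [A' [RA' A'B]]; destruct (dR a) as [C [_ uC]].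
    rewrite (uC A RA), <- (uC A' RA'); exact A'B.
  - intros RS a B SB; destruct (dR a) as [A [RA _]].
    exists A; split; [exact RA | exact (RS a A B RA SB)].
Qed.

Lemma partial_order_onI (P : mrel X Y -> Prop) (rel : mrel X Y -> mrel X Y -> Prop) :
  (forall R, rel R R) ->
  (forall R S T, rel R S -> rel S T -> rel R T) ->
  (forall R S, P R -> P S -> rel R S -> rel S R -> mincl R S) ->
  partial_order_on P rel.
Proof.
  intros refl trans antisym; split; [| split].
  - intros R _; apply refl.
  - intros R S T _ _ _; apply trans.
  - intros R S PR PS RS SR; apply mrel_ext; auto.
Qed.

End Refinement.

Theorem proposition5p8 (X Y : Type) :
  (* (1) *)
  (forall R S : mrel X Y, inner_deterministic R -> inner_deterministic S ->
     (ref_down R S <-> mincl R S) /\ (ref_up R S <-> mincl S R) /\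
     (ref_updown R S <-> R = S)) /\
  (* (2) *)
  partial_order_on (@inner_univalent X Y) (@ref_updown X Y) /\
  (* (3) *)
  (partial_order_on (@outer_univalent X Y) (@ref_down X Y) /\
   partial_order_on (@outer_univalent X Y) (@ref_up X Y) /\
   partial_order_on (@outer_univalent X Y) (@ref_updown X Y)) /\
  (* (4) *)
  (forall R S : mrel X Y, outer_deterministic R -> outer_deterministic S ->
     (ref_down R S <-> ref_up R S) /\ (ref_up R S <-> ref_updown R S)).
Proof.
  split; [| split; [| split; [split; [| split] |]]].
  - intros R S dR dS; pose proof (inner_deterministic_univalent dS) as uS.
    split; [| split];
      [apply ref_down_iff_mincl | apply ref_up_iff_mincl | apply ref_updown_iff_eq];
      assumption.
  - apply partial_order_onI; [exact (@ref_updown_refl X Y) | exact (@ref_updown_trans X Y) |].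
    intros R S uR uS [RS _] [_ SR]; exact (ref_updown_antisym_mincl uR uS RS SR).
  - apply partial_order_onI; [exact (@ref_down_refl X Y) | exact (@ref_down_trans X Y) |].
    intros R S oR _; exact (ref_down_antisym_mincl oR).
  - apply partial_order_onI; [exact (@ref_up_refl X Y) | exact (@ref_up_trans X Y) |].
    intros R S oR _; exact (ref_up_antisym_mincl oR).
  - apply partial_order_onI; [exact (@ref_updown_refl X Y) | exact (@ref_updown_trans X Y) |].
    intros R S oR _ [RS _] [SR _]; exact (ref_down_antisym_mincl oR RS SR).
  - intros R S dR dS.
    assert (down_up : ref_down R S <-> ref_up R S).
    { rewrite (ref_down_outer_deterministic R dS), (ref_up_outer_deterministic S dR).
      reflexivity. }
    split; [exact down_up |].
    unfold ref_updown; tauto.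
Qed.
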